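(* Let $G=(B\cup W,E)$ be a bipartite graph that admits a BW-automorphism. Then, as an instance of Bipartite Influence, $G=0$; in particular $Ls(G)=Rs(G)=0$.
   Context: Bipartite Influence: played on a bipartite graph $G=(B\cup W,E)$ with black vertices $B$ and white vertices $W$, edges between $B$ and $W$. Isolated vertices are credited to the owner of their colour (black to Left, white to Right). On her turn Left picks a black vertex $x$ and removes $x$, its neighbours, and the vertices that thereby become isolated (credited to her); Right does the same with white vertices. Score = Left's removed/credited vertices minus Right's. $Ls(G)$, $Rs(G)$ are the optimal scores when Left, resp. Right, moves first. The disjoint union of positions is their disjunctive sum; $G=0$ means $Ls(G+H)=Ls(H)$ and $Rs(G+H)=Rs(H)$ for every Bipartite Influence position (more generally every dicotic nonzugzwang scoring game) $H$. A BW-automorphism of $G$ is a graph automorphism $\varphi$ of $G$ that is involutive ($\varphi(\varphi(u))=u$ for all $u$), maps black vertices to white vertices and white to black, and satisfies $d(v,\varphi(v))\geq 3$ for every vertex $v$, where $d$ is the shortest-path distance ($d=\infty$ between different connected components). *)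

From mathcomp Require Import all_boot all_order all_algebra.
Set Implicit Arguments. Unset Strict Implicit. Unset Printing Implicit Defensive.
Import Order.TTheory GRing.Theory Num.Theory.
Local Open Scope ring_scope.

(* A bipartite graph: a finite vertex type [V], a colouring [black]
   (true = black vertex, in B; false = white vertex, in W), and an
   adjacency relation [adj] that is symmetric, irreflexive and only joins
   vertices of different colours. *)
Definition is_bigraph (V : finType) (black : V -> bool) (adj : rel V) : Prop :=
  symmetric adj /\ irreflexive adj /\ (forall u v, adj u v -> black u != black v).

(* Positions of Bipartite Influence reachable from G are induced subgraphs,
   given by the set S of remaining vertices. *)
Definition nbrs (V : finType) (adj : rel V) (S : {set V}) (x : V) : {set V} :=
  [set y in S | adj x y].
Definition closed_nbhd (V : finType) (adj : rel V) (S : {set V}) (x : V) : {set V} :=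
  x |: nbrs adj S x.
Definition isolated (V : finType) (adj : rel V) (S : {set V}) : {set V} :=
  [set v in S | nbrs adj S v == set0].
Definition core (V : finType) (adj : rel V) (S : {set V}) : {set V} :=
  S :\: isolated adj S.
(* isolated vertices are credited to the owner of their colour *)
Definition credit (V : finType) (black : V -> bool) (adj : rel V) (S : {set V}) : int :=
  (#|[set v in isolated adj S | black v]|%N)%:Z - (#|[set v in isolated adj S | ~~ black v]|%N)%:Z.

(* max / min of a list of scores (0 on the empty list: no move, game over) *)
Definition seqmax (s : seq int) : int := if s is a :: t then foldr Num.max a t else 0.
Definition seqmin (s : seq int) : int := if s is a :: t then foldr Num.min a t else 0.

(* Optimal score (Left's points minus Right's) of the induced position S,
   with the given player to move, computed with fuel n (n >= #|S| suffices,
   since every move removes at least one vertex).  Isolated vertices of S are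
   credited first; then the player to move picks a vertex x of her colour in
   the non-isolated part C and removes N[x] (scoring its size); the vertices
   that thereby become isolated are credited in the recursive call (they all
   have the colour of the mover). *)
Fixpoint bi_value (V : finType) (black : V -> bool) (adj : rel V)
    (n : nat) (leftToMove : bool) (S : {set V}) : int :=
  credit black adj S +
  match n with
  | 0 => 0
  | n'.+1 =>
    let C := core adj S in
    if leftToMove then
      seqmax [seq (#|closed_nbhd adj C x|%N)%:Z
                  + bi_value black adj n' false (C :\: closed_nbhd adj C x)
             | x <- enum [set x in C | black x]]
    else
      seqmin [seq - (#|closed_nbhd adj C y|%N)%:Z
                  + bi_value black adj n' true (C :\: closed_nbhd adj C y)
             | y <- enum [set y in C | ~~ black y]]
  end.

Definition Ls (V : finType) (black : V -> bool) (adj : rel V) : int :=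
  bi_value black adj #|V|%N true setT.
Definition Rs (V : finType) (black : V -> bool) (adj : rel V) : int :=
  bi_value black adj #|V|%N false setT.

Definition sum_black (V V' : finType) (black : V -> bool) (black' : V' -> bool)
  (z : V + V') : bool :=
  match z with inl v => black v | inr v => black' v end.
Definition sum_adj (V V' : finType) (adj : rel V) (adj' : rel V') : rel (V + V') :=
  fun z w => match z, w with
             | inl u, inl v => adj u v
             | inr u, inr v => adj' u v
             | _, _ => false
             end.

Definition is_zero (V : finType) (black : V -> bool) (adj : rel V) : Prop :=
  forall (V' : finType) (black' : V' -> bool) (adj' : rel V'),
    is_bigraph black' adj' ->
    Ls (sum_black black black') (sum_adj adj adj') = Ls black' adj' /\
    Rs (sum_black black black') (sum_adj adj adj') = Rs black' adj'.

(* d(u,v) >= 3 in the shortest-path distance: no walk of length 0, 1 or 2 *)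
Definition dist_ge3 (V : finType) (adj : rel V) (u v : V) : Prop :=
  u != v /\ ~~ adj u v /\ ~~ [exists w, adj u w && adj w v].

Definition BW_automorphism (V : finType) (black : V -> bool) (adj : rel V)
    (phi : V -> V) : Prop :=
  (forall u v, adj (phi u) (phi v) = adj u v) /\
  involutive phi /\
  (forall v, black (phi v) = ~~ black v) /\
  (forall v, dist_ge3 adj v (phi v)).

From mathcomp Require Import all_boot all_order all_algebra.
From mathcomp Require Import zify.
Set Implicit Arguments. Unset Strict Implicit. Unset Printing Implicit Defensive.
Import Order.TTheory GRing.Theory Num.Theory.
Local Open Scope ring_scope.

(* Let P be a union of components of a position on which phi is a
   colour-swapping involution moving every vertex to distance at least 3.
   Deleting P from a phi-stable position does not change its score, by
   induction on its size.  The isolated vertices of P pair off with opposite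
   colours.  When Left moves at x in P, Right answers at phi x, which is still
   available and whose closed neighbourhood is the mirror image of N[x], so the
   position becomes phi-stable again; Right's moves are handled by reversing
   the colours.  When the position lies inside P, the mirror argument only
   shows that moving first gains nothing (Ls <= 0 <= Rs); the converse is
   nonzugzwang (Rs <= Ls): deleting a white vertex costs Left at most one
   point, so Left's move at a black x is worth at least as much to Left as
   letting Right move first in the same position.
   Taking P = G gives Ls G = Rs G = 0, and taking P = G inside G + H shows that
   G + H has the scores of H. *)

Lemma seqmax_ub (s : seq int) z : z \in s -> z <= seqmax s.
Proof.
case: s => // a t; elim: t z => [|c t IH] z /=; first by rewrite inE => /eqP->.
rewrite !inE le_max => /or3P[/eqP->|/eqP->|zt]; rewrite ?lexx ?orbT //.
- by rewrite IH ?inE ?eqxx ?orbT.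
- by rewrite IH ?inE ?zt ?orbT.
Qed.

Lemma seqmin_lb (s : seq int) z : z \in s -> seqmin s <= z.
Proof.
case: s => // a t; elim: t z => [|c t IH] z /=; first by rewrite inE => /eqP->.
rewrite !inE ge_min => /or3P[/eqP->|/eqP->|zt]; rewrite ?lexx ?orbT //.
- by rewrite IH ?inE ?eqxx ?orbT.
- by rewrite IH ?inE ?zt ?orbT.
Qed.

Lemma seqmax_mem (s : seq int) : s != [::] -> seqmax s \in s.
Proof.
case: s => // a t _; elim: t => [|c t IH] /=; first by rewrite inE.
rewrite !inE /Num.max; case: ifP => _; rewrite ?eqxx ?orbT //.
by move: IH; rewrite inE => /orP[->|->]; rewrite ?orbT.
Qed.

Lemma seqmin_mem (s : seq int) : s != [::] -> seqmin s \in s.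
Proof.
case: s => // a t _; elim: t => [|c t IH] /=; first by rewrite inE.
rewrite !inE /Num.min; case: ifP => _; rewrite ?eqxx ?orbT //.
by move: IH; rewrite inE => /orP[->|->]; rewrite ?orbT.
Qed.

Lemma seqmin_opp (s : seq int) : seqmin [seq - z | z <- s] = - seqmax s.
Proof. by case: s => [|a t] /=; [rewrite oppr0 | elim: t => //= c t ->; rewrite oppr_max]. Qed.

Lemma seqmax_opp (s : seq int) : seqmax [seq - z | z <- s] = - seqmin s.
Proof. by case: s => [|a t] /=; [rewrite oppr0 | elim: t => //= c t ->; rewrite oppr_min]. Qed.

Lemma eq_seqmax (s1 s2 : seq int) : s1 =i s2 -> seqmax s1 = seqmax s2.
Proof.
case: s1 s2 => [|a1 t1] [|a2 t2] // eq12.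
- by have := eq12 a2; rewrite inE eqxx.
- by have := eq12 a1; rewrite inE eqxx.
- apply/eqP; rewrite eq_le; apply/andP; split; apply: seqmax_ub.
    by rewrite -eq12 seqmax_mem.
  by rewrite eq12 seqmax_mem.
Qed.

Lemma eq_seqmin (s1 s2 : seq int) : s1 =i s2 -> seqmin s1 = seqmin s2.
Proof.
case: s1 s2 => [|a1 t1] [|a2 t2] // eq12.
- by have := eq12 a2; rewrite inE eqxx.
- by have := eq12 a1; rewrite inE eqxx.
- apply/eqP; rewrite eq_le; apply/andP; split; apply: seqmin_lb.
    by rewrite eq12 seqmin_mem.
  by rewrite -eq12 seqmin_mem.
Qed.

Section Game.
Variables (T : finType) (black : T -> bool) (adj : rel T).
Local Notation nbhd := (closed_nbhd adj).

Lemma in_nbhd (C : {set T}) x y :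
  (y \in nbhd C x) = (y == x) || (y \in C) && adj x y.
Proof. by rewrite !inE. Qed.

Lemma nbhd_sub (A : {set T}) x : x \in A -> nbhd A x \subset A.
Proof. by move=> xA; apply/subsetP => v; rewrite in_nbhd => /orP[/eqP-> | /andP[]]. Qed.

Lemma card_setD_nbhd (A S : {set T}) x : x \in S -> (#|S :\: nbhd A x| < #|S|)%N.
Proof.
move=> xS; rewrite (cardsD1 x S) xS add1n ltnS subset_leq_card //.
by apply/subsetP => v; rewrite !inE => /andP[/norP[vx _] ->]; rewrite andbT.
Qed.

Definition score b S := bi_value black adj #|T| b S.

Definition left_move (C : {set T}) x : int :=
  (#|nbhd C x|%N)%:Z + score false (C :\: nbhd C x).
Definition right_move (C : {set T}) y : int :=
  - (#|nbhd C y|%N)%:Z + score true (C :\: nbhd C y).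

Definition core_score b (C : {set T}) : int :=
  if b then seqmax [seq left_move C x | x <- enum [set x in C | black x]]
  else seqmin [seq right_move C y | y <- enum [set y in C | ~~ black y]].

Definition signed_card (A : {set T}) : int :=
  \sum_(v in A) (if black v then 1 else -1).

Lemma signed_card0 : signed_card set0 = 0.
Proof. by rewrite /signed_card big_set0. Qed.

Lemma signed_card1 v : signed_card [set v] = if black v then 1 else -1.
Proof. by rewrite /signed_card big_set1. Qed.

Lemma signed_cardU (A B : {set T}) :
  [disjoint A & B] -> signed_card (A :|: B) = signed_card A + signed_card B.
Proof. by move=> dAB; rewrite /signed_card -bigU //; apply: eq_bigl => v; rewrite !inE. Qed.

Lemma credit_signed_card (S : {set T}) :
  credit black adj S = signed_card (isolated adj S).
Proof.
rewrite /signed_card (big_setID [set v | black v]) /=.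
rewrite (eq_bigr (fun=> 1)) => [|v]; last by rewrite !inE => /andP[_ ->].
rewrite [X in _ + X](eq_bigr (fun=> -1)) => [|v]; last by rewrite !inE => /andP[/negbTE-> _].
rewrite !sumr_const mulNrn /credit !natz.
by congr (Posz _ - Posz _); apply: eq_card => v; rewrite !inE andbC.
Qed.

Lemma isolated_set0 : isolated adj set0 = set0.
Proof. by apply/setP => x; rewrite !inE. Qed.

Lemma core_set0 : core adj set0 = set0.
Proof. exact: set0D. Qed.

Lemma core_score_set0 b : core_score b set0 = 0.
Proof. by rewrite /core_score !setIdE !set0I enum_set0; case: b. Qed.

Lemma bi_value_set0 n b : bi_value black adj n b set0 = 0.
Proof.
case: n => [|n] /=; rewrite credit_signed_card isolated_set0 signed_card0 ?addr0 //.
by rewrite core_set0 !setIdE !set0I enum_set0; case: b.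
Qed.

Lemma bi_value_fuel n m b (S : {set T}) : (#|S| <= n)%N -> (#|S| <= m)%N ->
  bi_value black adj n b S = bi_value black adj m b S.
Proof.
elim: n m b S => [|n IH] m b S leSn leSm.
  by move: leSn; rewrite leqn0 cards_eq0 => /eqP->; rewrite !bi_value_set0.
case: m leSm => [|m] leSm.
  by move: leSm; rewrite leqn0 cards_eq0 => /eqP->; rewrite !bi_value_set0.
rewrite /=; congr (_ + _); case: b; [congr seqmax | congr seqmin];
  apply/eq_in_map => x; rewrite mem_enum inE => /andP[xC _]; congr (_ + _); apply: IH;
  have := card_setD_nbhd (core adj S) xC;
  by have := subset_leq_card (subsetDl S (isolated adj S)); rewrite /core; lia.
Qed.

Lemma score_unfold b (S : {set T}) :
  score b S = credit black adj S + core_score b (core adj S).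
Proof.
rewrite /score; case E: #|T| => [|k] /=.
  have -> : S = set0 by apply/eqP; rewrite -cards_eq0 -leqn0 -E max_card.
  by rewrite core_set0 core_score_set0.
congr (_ + _); case: b; [congr seqmax | congr seqmin];
  apply/eq_in_map => x; rewrite mem_enum inE => /andP[xC _];
  rewrite /left_move /right_move /score; congr (_ + _); apply: bi_value_fuel; rewrite ?max_card //;
  have := card_setD_nbhd (core adj S) xC; have := max_card (core adj S); rewrite E; lia.
Qed.

Lemma score_set0 b : score b set0 = 0.
Proof. exact: bi_value_set0. Qed.

Lemma isolatedP (S : {set T}) v :
  reflect (v \in S /\ forall y, y \in S -> ~~ adj v y) (v \in isolated adj S).
Proof.
rewrite inE; apply: (iffP andP) => -[vS nS]; split => //.
  by move=> y yS; apply: contraTN nS => vy; apply/set0Pn; exists y; rewrite inE yS.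
by apply/eqP/setP => y; rewrite !inE; case: (boolP (y \in S)) => //= /nS /negbTE.
Qed.

Lemma coreP (S : {set T}) v :
  reflect (v \in S /\ exists2 y, y \in S & adj v y) (v \in core adj S).
Proof.
rewrite inE; apply: (iffP andP) => [[/isolatedP vI vS] | [vS [y yS vy]]]; split => //.
  have [/exists_inP[y yS vy] | /exists_inPn vN] := boolP [exists y in S, adj v y].
    by exists y.
  by case: vI.
by apply/isolatedP => -[_ /(_ y yS)]; rewrite vy.
Qed.

Lemma core_sub (S : {set T}) : core adj S \subset S.
Proof. exact: subsetDl. Qed.

Lemma in_core (S : {set T}) v : v \in S -> (v \in core adj S) = (v \notin isolated adj S).
Proof. by move=> vS; rewrite inE vS andbT. Qed.

Lemma isolated_setD_core (S : {set T}) : isolated adj S = S :\: core adj S.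
Proof.
by rewrite setDDr setDv set0U; apply/esym/setIidPr/subsetP => v /isolatedP[].
Qed.

Lemma score_isolated0 b (C : {set T}) :
  isolated adj C = set0 -> score b C = core_score b C.
Proof.
by move=> C0; rewrite score_unfold credit_signed_card /core C0 setD0 signed_card0 add0r.
Qed.

Hypothesis adj_sym : symmetric adj.

Lemma isolated_core (S : {set T}) : isolated adj (core adj S) = set0.
Proof.
apply/setP => v; rewrite [RHS]inE; apply/negbTE/isolatedP => -[/coreP[vS [y yS vy]] nC].
have yC : y \in core adj S by apply/coreP; split; last by exists v; rewrite // adj_sym.
by have := nC y yC; rewrite vy.
Qed.

Lemma score_add_isolated b (X Y : {set T}) : Y \subset X ->
  {in X :\: Y & X, forall v y, ~~ adj v y} ->
  score b X = score b Y + signed_card (X :\: Y).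
Proof.
move=> YX nadj.
have inY u w : u \in X -> w \in X -> adj u w -> u \in Y.
  by move=> uX wX; apply: contraTT => uY; apply: nadj; rewrite // inE uY.
have coreXY : core adj X = core adj Y.
  apply/setP => v; apply/coreP/coreP => -[vX [y yX vy]].
    by split; [exact: inY vy | exists y; rewrite // (inY y v) // adj_sym].
  by split; [exact: (subsetP YX) | exists y; rewrite // (subsetP YX)].
have isoXY : isolated adj X = isolated adj Y :|: (X :\: Y).
  rewrite !isolated_setD_core coreXY; apply/setP => v; rewrite !inE.
  by case: (boolP (v \in Y)) => // /(subsetP YX) ->; rewrite orbF.
rewrite !score_unfold !credit_signed_card coreXY isoXY signed_cardU; first by rewrite addrAC.
by rewrite disjoints_subset; apply/subsetP => v /isolatedP[vY _]; rewrite !inE vY.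
Qed.

Lemma score_setD_core b (S A : {set T}) :
  score b (S :\: A) = score b (core adj S :\: A) + signed_card (isolated adj S :\: A).
Proof.
rewrite (@score_add_isolated b (S :\: A) (core adj S :\: A)) ?setSD ?core_sub //.
  by congr (_ + _); congr signed_card; rewrite isolated_setD_core; apply/setP => v;
    rewrite !inE; case: (v \in A).
move=> v y /setDP[/setDP[vS vA] vC] /setDP[yS _].
rewrite in_setD vA in_core // negbK in vC.
by move: vC => /isolatedP[_ /(_ y yS)].
Qed.

Lemma score_setD1_isolated b (S : {set T}) v : v \in isolated adj S ->
  score b S = score b (S :\ v) + (if black v then 1 else -1).
Proof.
move=> /isolatedP[vS nv]; rewrite (@score_add_isolated b S (S :\ v)) ?subsetDl //.
  rewrite -signed_card1; congr (_ + signed_card _); apply/setP => u; rewrite !inE.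
  by case: (eqVneq u v) => [->|_]; [rewrite vS | case: (u \in S)].
by move=> u y /setDP[uS]; rewrite !inE uS andbT negbK => /eqP-> /nv.
Qed.

Lemma left_move_le_core_score (C : {set T}) x :
  x \in C -> black x -> left_move C x <= core_score true C.
Proof. by move=> xC bx; apply: seqmax_ub; apply: map_f; rewrite mem_enum inE xC bx. Qed.

Lemma core_score_le_right_move (C : {set T}) y :
  y \in C -> ~~ black y -> core_score false C <= right_move C y.
Proof. by move=> yC wy; apply: seqmin_lb; apply: map_f; rewrite mem_enum inE yC wy. Qed.

Lemma core_score_true_le (C : {set T}) x0 K : x0 \in C -> black x0 ->
  {in C, forall x, black x -> left_move C x <= K} -> core_score true C <= K.
Proof.
move=> x0C bx0 leK; have /mapP[x] : core_score true C \in
    [seq left_move C x | x <- enum [set x in C | black x]].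
  apply: seqmax_mem; rewrite -size_eq0 size_map -cardE -lt0n.
  by apply/card_gt0P; exists x0; rewrite inE x0C.
by rewrite mem_enum inE => /andP[xC bx] ->; apply: leK.
Qed.

Lemma le_core_score_false (C : {set T}) y0 K : y0 \in C -> ~~ black y0 ->
  {in C, forall y, ~~ black y -> K <= right_move C y} -> K <= core_score false C.
Proof.
move=> y0C wy0 geK; have /mapP[y] : core_score false C \in
    [seq right_move C y | y <- enum [set y in C | ~~ black y]].
  apply: seqmin_mem; rewrite -size_eq0 size_map -cardE -lt0n.
  by apply/card_gt0P; exists y0; rewrite inE y0C.
by rewrite mem_enum inE => /andP[yC wy] ->; apply: geK.
Qed.

Hypothesis adj_irr : irreflexive adj.
Hypothesis adj_bip : forall u v, adj u v -> black u != black v.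

Lemma monochromatic_set0 (C : {set T}) c :
  isolated adj C = set0 -> {in C, forall v, black v = c} -> C = set0.
Proof.
move=> C0 mono; apply/setP => v; rewrite inE; apply/negbTE/negP => vC.
have /coreP[_ [y yC vy]] : v \in core adj C by rewrite /core C0 setD0.
by have := adj_bip vy; rewrite !mono ?eqxx.
Qed.

Definition white_deletion_bound n := forall b (S : {set T}) w,
  (#|S| <= n)%N -> w \in S -> ~~ black w -> score b S <= score b (S :\ w) + 1.

Section WhiteDeletionStep.
Variables (n : nat) (wdb : white_deletion_bound n).

Lemma score_setD_whites b (S W : {set T}) : (#|S| <= n)%N -> W \subset S ->
  {in W, forall w, ~~ black w} -> score b S <= score b (S :\: W) + (#|W|%N)%:Z.
Proof.
have [k] := ubnP #|W|; elim: k W S => // k IH W S ltWk leSn WS Wwhite.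
have [->|[w wW]] := set_0Vmem W; first by rewrite setD0 cards0 addr0.
apply: le_trans (wdb b leSn (subsetP WS w wW) (Wwhite w wW)) _.
have := IH (W :\ w) (S :\ w); rewrite setDDl setD1K // (cardsD1 w W) wW.
have ltW'k : (#|W :\ w| < k)%N by move: ltWk; rewrite (cardsD1 w W) wW.
have leS'n : (#|S :\ w| <= n)%N := leq_trans (subset_leq_card (subsetDl S _)) leSn.
move=> /(_ ltW'k leS'n (setSD _ WS)) le; rewrite add1n -addn1 PoszD addrA lerD2r.
by apply: le => v /setD1P[_ /Wwhite].
Qed.

Lemma score_le_left_move b (S : {set T}) x : (#|S| <= n)%N -> x \in S -> black x ->
  score b S <= (#|nbhd S x|%N)%:Z + score b (S :\: nbhd S x).
Proof.
move=> leSn xS bx; set W := nbrs adj S x.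
have WS : W \subset S by apply/subsetP => v /setIdP[].
have xW : x \notin W by rewrite inE adj_irr andbF.
have Wwhite : {in W, forall w, ~~ black w}.
  by move=> v /setIdP[_ /adj_bip]; rewrite bx; case: (black v).
have xI : x \in isolated adj (S :\: W).
  apply/isolatedP; split=> [|y /setDP[yS yW]]; first by rewrite inE xW.
  by apply: contra yW => xy; rewrite inE yS.
apply: le_trans (score_setD_whites b leSn WS Wwhite) _.
rewrite (score_setD1_isolated b xI) bx setDDl setUC /closed_nbhd cardsU1 xW -/W.
by move: (score b _) #|W| => s k; rewrite /= add1n; lia.
Qed.

Lemma nonzugzwang_le (S : {set T}) : (#|S| <= n)%N -> score false S <= score true S.
Proof.
move=> leSn; rewrite !score_unfold lerD2l; set C := core adj S.
have leCn : (#|C| <= n)%N := leq_trans (subset_leq_card (core_sub S)) leSn.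
have [/exists_inP[x xC bx] | /exists_inPn noblack] := boolP [exists x in C, black x].
  rewrite -(score_isolated0 false (isolated_core S)).
  exact: le_trans (score_le_left_move false leCn xC bx) (left_move_le_core_score xC bx).
rewrite (@monochromatic_set0 C false) ?core_score_set0 ?isolated_core //.
by move=> v /noblack /negbTE.
Qed.

(* [U] consists of the black leaves hanging at [w]; a move in [C] is compared
   with the same move in [D]. *)
Section DeleteWhiteFromCore.
Variables (C : {set T}) (w : T).
Hypotheses (leCn : (#|C| <= n.+1)%N) (C0 : isolated adj C = set0).
Hypotheses (wC : w \in C) (ww : ~~ black w).

Let R := C :\ w.
Let U := isolated adj R.
Let D := core adj R.

Lemma isolated_rest u : u \in U ->
  [/\ black u, adj u w & {in C, forall y, adj u y -> y = w}].
Proof.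
move=> /isolatedP[uR nu].
have onlyw : {in C, forall y, adj u y -> y = w}.
  move=> y yC uy; apply/eqP; apply: contraTT uy => yw; apply: nu.
  by rewrite /R !inE yw yC.
have /coreP[_ [y yC uy]] : u \in core adj C.
  by rewrite /core C0 setD0 (subsetP (subsetDl C [set w]) u uR).
have yw := onlyw y yC uy; split=> //; last by rewrite -yw.
by move: (adj_bip uy) ww; rewrite -yw; case: (black u); case: (black y).
Qed.

Lemma signed_card_rest_ge0 : 0 <= signed_card U.
Proof. by apply: sumr_ge0 => u /isolated_rest[-> _ _]. Qed.

Lemma score_rest b : score b R = signed_card U + core_score b D.
Proof. by rewrite score_unfold credit_signed_card. Qed.

Lemma score_rest_setD b (A : {set T}) : A \subset D ->
  score b (R :\: A) = score b (D :\: A) + signed_card U.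
Proof.
move=> AD; rewrite score_setD_core; congr (_ + signed_card _); apply/setDidPl.
rewrite disjoint_sym disjoints_subset (subset_trans AD) //.
by rewrite /D /core setDE subsetIr.
Qed.

Lemma w_notin_rest : w \notin R.
Proof. by rewrite !inE eqxx. Qed.

Lemma D_sub_C : D \subset C.
Proof. exact: subset_trans (core_sub R) (subsetDl C _). Qed.

Lemma in_nbhd_rest x v : x \in D -> v != w -> (v \in nbhd C x) = (v \in nbhd D x).
Proof.
move=> xD vw; rewrite !in_nbhd; case: (v == x) => //=.
apply/andP/andP => -[vC xv]; split => //; last exact: (subsetP D_sub_C).
apply/coreP; split; first by rewrite !inE vw.
by exists x; rewrite 1?adj_sym // (subsetP (core_sub R)).
Qed.

Lemma w_notin_nbhd_rest x : x \in D -> w \notin nbhd D x.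
Proof.
move=> xD; apply: contra w_notin_rest => /(subsetP (nbhd_sub xD)).
exact: (subsetP (core_sub R)).
Qed.

Lemma nbhd_rest_adj x : x \in D -> adj x w -> nbhd C x = w |: nbhd D x.
Proof.
move=> xD xw; apply/setP => v; rewrite in_setU1; case: eqVneq => [->|vw] /=.
  by rewrite in_nbhd wC xw orbT.
exact: in_nbhd_rest.
Qed.

Lemma nbhd_rest_nonadj x : x \in D -> ~~ adj x w -> nbhd C x = nbhd D x.
Proof.
move=> xD xw; apply/setP => v; case: (eqVneq v w) => [->|vw]; last exact: in_nbhd_rest.
rewrite (negbTE (w_notin_nbhd_rest xD)) in_nbhd (negbTE xw) andbF orbF.
by apply: contraNF w_notin_rest => /eqP->; exact: (subsetP (core_sub R)).
Qed.

Lemma score_setD_nbhd_rest b x : x \in D -> ~~ adj x w ->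
  score b (C :\: nbhd C x) <= score b (D :\: nbhd D x) + signed_card U + 1.
Proof.
move=> xD xw; rewrite nbhd_rest_nonadj // -score_rest_setD ?nbhd_sub //.
have ltCn : (#|C :\: nbhd D x| <= n)%N.
  by have := card_setD_nbhd D (subsetP D_sub_C x xD); lia.
have wCN : w \in C :\: nbhd D x by rewrite in_setD wC w_notin_nbhd_rest.
by have := wdb b ltCn wCN ww; rewrite setDDl setUC -setDDl.
Qed.

Lemma left_move_rest x : x \in D -> left_move C x <= left_move D x + signed_card U + 1.
Proof.
move=> xD; rewrite /left_move; have [xw | xw] := boolP (adj x w); last first.
  by have := score_setD_nbhd_rest false xD xw; rewrite nbhd_rest_nonadj //; lia.
rewrite nbhd_rest_adj // cardsU1 w_notin_nbhd_rest // -setDDl.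
by rewrite score_rest_setD ?nbhd_sub //; lia.
Qed.

Lemma right_move_rest y : y \in D -> ~~ black y ->
  right_move C y <= right_move D y + signed_card U + 1.
Proof.
move=> yD wy; have yw : ~~ adj y w.
  by apply: contraL ww => /adj_bip; rewrite (negbTE wy); case: (black w).
by have := score_setD_nbhd_rest true yD yw; rewrite /right_move nbhd_rest_nonadj //; lia.
Qed.

Lemma left_move_isolated_rest x : x \in U -> left_move C x <= score true R + 1.
Proof.
move=> xU; have [bx xw onlyw] := isolated_rest xU.
have xR : x \in R by move: xU => /isolatedP[].
have xnw : x != w by apply: contraTneq xR => ->; exact: w_notin_rest.
have -> : left_move C x = 2%:Z + score false (R :\ x).
  rewrite /left_move; have -> : nbhd C x = [set x; w].
    apply/setP => v; rewrite in_nbhd !inE; case: eqVneq => //= _.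
    by apply/andP/eqP => [[vC /(onlyw v vC)] // | ->]; rewrite wC.
  by rewrite cards2 xnw setDDl setUC.
have leRn : (#|R| <= n)%N by move: leCn; rewrite (cardsD1 w C) wC.
have := nonzugzwang_le leRn; rewrite (score_setD1_isolated false xU) bx; lia.
Qed.

Lemma core_score_true_rest : core_score true C <= score true R + 1.
Proof.
have /coreP[_ [x0 x0C wx0]] : w \in core adj C by rewrite /core C0 setD0.
have bx0 : black x0 by move: (adj_bip wx0) ww; case: (black w); case: (black x0).
apply: (core_score_true_le x0C bx0) => x xC bx.
have xR : x \in R by rewrite !inE xC andbT; apply: contraTneq bx => ->.
have [xD | xU] := boolP (x \in D); last first.
  by apply: left_move_isolated_rest; move: xU; rewrite /D in_core // negbK.
apply: le_trans (left_move_rest xD) _.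
by have := left_move_le_core_score xD bx; rewrite score_rest; lia.
Qed.

Lemma core_score_false_rest : core_score false C <= score false R + 1.
Proof.
rewrite score_rest.
have [/exists_inP[y0 y0D wy0] | /exists_inPn nowhite] := boolP [exists y in D, ~~ black y].
  suff : core_score false C - signed_card U - 1 <= core_score false D by lia.
  apply: (le_core_score_false y0D wy0) => y yD wy.
  by have := core_score_le_right_move (subsetP D_sub_C y yD) wy; have := right_move_rest yD wy; lia.
have D0 : D = set0.
  by apply: (@monochromatic_set0 D true (isolated_core R)) => v /nowhite /negPn.
apply: le_trans (core_score_le_right_move wC ww) _; rewrite /right_move.
have -> : C :\: nbhd C w = set0.
  apply/setP => v; rewrite !inE; case: eqVneq => //= vw; case vC: (v \in C) => //=.
  have vR : v \in R by rewrite !inE vw.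
  have vU : v \in U by rewrite -(negbK (v \in U)) -in_core // -/D D0 inE.
  by have [_ + _] := isolated_rest vU; rewrite adj_sym andbT => ->.
rewrite score_set0 D0 core_score_set0 addr0.
by have := signed_card_rest_ge0; lia.
Qed.

End DeleteWhiteFromCore.

Lemma white_deletion_step : white_deletion_bound n.+1.
Proof.
move=> b S w leS wS ww.
have [wI | wnI] := boolP (w \in isolated adj S).
  by rewrite (score_setD1_isolated b wI) (negbTE ww) lerD2l.
have := score_setD_core b S set0; rewrite !setD0 => ->.
rewrite score_setD_core; have -> : isolated adj S :\ w = isolated adj S.
  by apply/setDidPl; rewrite disjoint_sym disjoints1.
rewrite (score_isolated0 b (isolated_core S)) addrAC lerD2r.
have leCn : (#|core adj S| <= n.+1)%N := leq_trans (subset_leq_card (core_sub S)) leS.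
have wC : w \in core adj S by rewrite in_core.
by case: b; [apply: core_score_true_rest | apply: core_score_false_rest];
  rewrite ?isolated_core.
Qed.

End WhiteDeletionStep.

Lemma white_deletion n : white_deletion_bound n.
Proof.
elim: n => [b S w | n IH]; last exact: white_deletion_step.
by rewrite leqn0 cards_eq0 => /eqP->; rewrite inE.
Qed.

Lemma nonzugzwang (S : {set T}) : score false S <= score true S.
Proof. exact: (@nonzugzwang_le _ (@white_deletion _) S (leqnn _)). Qed.

End Game.

Lemma credit_negb (T : finType) (black : T -> bool) (adj : rel T) (S : {set T}) :
  credit (negb \o black) adj S = - credit black adj S.
Proof.
by rewrite /credit opprB; congr (_ - _); congr Posz; apply: eq_card => v; rewrite !inE /= ?negbK.
Qed.

Lemma bi_value_negb (T : finType) (black : T -> bool) (adj : rel T) n b (S : {set T}) :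
  bi_value (negb \o black) adj n b S = - bi_value black adj n (~~ b) S.
Proof.
elim: n b S => [|n IH] b S; cbn [bi_value]; first by rewrite !addr0 credit_negb.
rewrite credit_negb [RHS]opprD; congr (_ + _); case: b => /=.
- rewrite -seqmax_opp -map_comp; congr seqmax; apply: eq_map => x /=.
  by rewrite IH opprD opprK.
- rewrite -seqmin_opp -map_comp.
  rewrite (_ : [set y in _ | ~~ ~~ black y] = [set y in core adj S | black y]).
    by congr seqmin; apply: eq_map => x /=; rewrite IH opprD.
  by apply/setP => v; rewrite !inE negbK.
Qed.

Lemma score_negb (T : finType) (black : T -> bool) (adj : rel T) b (S : {set T}) :
  score (negb \o black) adj b S = - score black adj (~~ b) S.
Proof. exact: bi_value_negb. Qed.

Section SymmetricRemoval.
Variables (T : finType) (adj : rel T) (P : {set T}) (phi : T -> T).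
Hypotheses (adj_sym : symmetric adj) (adj_irr : irreflexive adj).
Hypotheses (phi_inv : involutive phi) (phi_adj : forall u v, adj (phi u) (phi v) = adj u v).
Hypothesis phiP : forall v, v \in P -> phi v \in P.
Hypothesis P_closed : forall u v, adj u v -> (u \in P) = (v \in P).
Hypothesis phi_far : forall v, v \in P -> dist_ge3 adj v (phi v).

Local Notation nbhd := (closed_nbhd adj).

Definition phi_stable (Q : {set T}) := forall v, v \in Q -> v \in P -> phi v \in Q.

Definition bw_colouring (black : T -> bool) :=
  (forall u v, adj u v -> black u != black v) /\
  (forall v, v \in P -> black (phi v) = ~~ black v).

Lemma mem_imset_phi (A : {set T}) v : (v \in phi @: A) = (phi v \in A).
Proof.
apply/imsetP/idP => [[u uA ->] | pvA]; first by rewrite phi_inv.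
by exists (phi v); rewrite ?phi_inv.
Qed.

Lemma phi_notin_P v : v \notin P -> phi v \notin P.
Proof. by apply: contra => /phiP; rewrite phi_inv. Qed.

Lemma phi_stable_mem (Q : {set T}) v : phi_stable Q -> v \in P -> (phi v \in Q) = (v \in Q).
Proof.
move=> Qs vP; apply/idP/idP => [pvQ | vQ]; last exact: Qs.
by rewrite -(phi_inv v); apply: Qs pvQ (phiP vP).
Qed.

Lemma phi_stable_core (Q : {set T}) : phi_stable Q -> phi_stable (core adj Q).
Proof.
move=> Qs v /coreP[vQ [y yQ vy]] vP; apply/coreP; split; first exact: Qs.
by exists (phi y); rewrite ?phi_adj // Qs // -(P_closed vy).
Qed.

Lemma core_setD_P (Q : {set T}) : core adj (Q :\: P) = core adj Q :\: P.
Proof.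
apply/setP => v; rewrite [RHS]in_setD; apply/coreP/andP.
  move=> [/setDP[vQ vP] [y /setDP[yQ _] vy]].
  by split=> //; apply/coreP; split=> //; exists y.
move=> [vP /coreP[vQ [y yQ vy]]].
by split; [rewrite in_setD vP | exists y; rewrite // in_setD yQ -(P_closed vy) vP].
Qed.

Lemma isolated_setD_P (Q : {set T}) : isolated adj (Q :\: P) = isolated adj Q :\: P.
Proof.
rewrite !isolated_setD_core core_setD_P; set K := core adj Q.
by apply/setP => v; rewrite !in_setD; case: (v \in P); rewrite ?andbF.
Qed.

Section Mirror.
Variables (C : {set T}) (x : T).
Hypotheses (C0 : isolated adj C = set0) (Cs : phi_stable C) (xC : x \in C) (xP : x \in P).

Let X := C :\: nbhd C x.

Lemma mirror_nbr_remains v : v \in C -> adj (phi x) v -> v \in X.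
Proof.
have [_ [nxpx /existsPn no2path]] := phi_far xP.
move=> vC pxv; rewrite in_setD vC andbT in_nbhd negb_or; apply/andP; split.
  by apply/eqP => vx; move: pxv; rewrite vx adj_sym (negbTE nxpx).
by apply/negP => /andP[_ xv]; have := no2path v; rewrite xv adj_sym pxv.
Qed.

Lemma mirror_remains_in_core : phi x \in core adj X.
Proof.
have [xpx [nxpx _]] := phi_far xP.
have /coreP[_ [z zC xz]] : x \in core adj C by rewrite /core C0 setD0.
apply/coreP; split.
  by rewrite in_setD Cs // andbT in_nbhd negb_or eq_sym xpx /= negb_and nxpx orbT.
exists (phi z); last by rewrite phi_adj.
by apply: mirror_nbr_remains; rewrite ?phi_adj // Cs // -(P_closed xz).
Qed.

Lemma nbhd_mirror : nbhd (core adj X) (phi x) = phi @: nbhd C x.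
Proof.
apply/setP => v; rewrite mem_imset_phi !in_nbhd.
have -> : (phi v == x) = (v == phi x) by apply/eqP/eqP => [<- | ->]; rewrite phi_inv.
case: eqVneq => //= _; rewrite -[adj x _]phi_adj phi_inv.
have [pxv | ] := boolP (adj (phi x) v); rewrite ?andbF ?andbT //.
have vP : v \in P by rewrite -(P_closed pxv) phiP.
rewrite phi_stable_mem //; apply/idP/idP => [/(subsetP (core_sub adj X)) /setDP[] // | vC].
apply/coreP; split; first exact: mirror_nbr_remains.
by exists (phi x); rewrite 1?adj_sym // (subsetP (core_sub adj X)) ?mirror_remains_in_core.
Qed.

End Mirror.

Section Colouring.
Variables (black : T -> bool) (col : bw_colouring black).

Lemma bw_bip u v : adj u v -> black u != black v.
Proof. by case: col => bip _; exact: bip. Qed.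

Lemma bw_phi v : v \in P -> black (phi v) = ~~ black v.
Proof. by case: col => _ flip; exact: flip. Qed.

Lemma signed_card_phi_stable (Z : {set T}) :
  Z \subset P -> phi_stable Z -> signed_card black Z = 0.
Proof.
move=> ZP Zs; suff : signed_card black Z = - signed_card black Z by lia.
rewrite {1}/signed_card (reindex_inj (inv_inj phi_inv)) /= -sumrN.
apply: eq_big => [v | v vZ]; last first.
  have vP : v \in P by rewrite -(phi_inv v) phiP // (subsetP ZP).
  by rewrite bw_phi //; case: (black v); rewrite ?opprK.
have [vP | vP] := boolP (v \in P); first exact: phi_stable_mem.
by rewrite (contraNF (subsetP ZP _) vP) (contraNF (subsetP ZP _) (phi_notin_P vP)).
Qed.

Lemma credit_setD_P (Q : {set T}) :
  phi_stable Q -> credit black adj Q = credit black adj (Q :\: P).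
Proof.
move=> Qs; rewrite !credit_signed_card isolated_setD_P -{1}(setID (isolated adj Q) P).
rewrite signed_cardU; last first.
  by rewrite disjoints_subset; apply/subsetP => v /setIP[_ vP]; rewrite !inE vP.
rewrite signed_card_phi_stable ?add0r ?subsetIr // => v /setIP[/isolatedP[vQ nv] vP] _.
rewrite inE phiP // andbT; apply/isolatedP; split=> [|y yQ]; first exact: Qs.
apply/negP => pvy; have yP : y \in P by rewrite -(P_closed pvy) phiP.
by have := nv (phi y) (Qs y yQ yP); rewrite -phi_adj phi_inv pvy.
Qed.

(* Right answers Left's move at [x] with the mirror move at [phi x]. *)
Lemma left_move_mirror (C : {set T}) x : isolated adj C = set0 -> phi_stable C ->
  x \in C -> x \in P -> black x ->
  left_move black adj C x <= score black adj true (C :\: nbhd C x :\: phi @: nbhd C x).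
Proof.
move=> C0 Cs xC xP bx; set X := C :\: nbhd C x; set M := phi @: nbhd C x.
have pxD : phi x \in core adj X := mirror_remains_in_core C0 Cs xC xP.
have MD : M \subset core adj X by rewrite /M -nbhd_mirror // nbhd_sub.
have cardM : #|M| = #|nbhd C x| by rewrite card_imset //; exact: inv_inj phi_inv.
have wpx : ~~ black (phi x) by rewrite bw_phi // bx.
have := core_score_le_right_move adj pxD wpx; rewrite /right_move nbhd_mirror // -/M cardM.
rewrite (score_setD_core black adj_sym true X M).
have -> : isolated adj X :\: M = isolated adj X.
  apply/setDidPl; rewrite disjoint_sym disjoints_subset (subset_trans MD) //.
  by rewrite isolated_setD_core setDE setCI setCK subsetUr.
have := score_unfold black adj false X; rewrite credit_signed_card /left_move -/X; lia.
Qed.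

Definition removal_bound n := forall black, bw_colouring black ->
  forall b (Q : {set T}), (#|Q| <= n)%N -> phi_stable Q ->
  score black adj b Q = score black adj b (Q :\: P).

Section RemovalStep.
Variables (n : nat) (IH : removal_bound n).

Lemma left_move_outside_P (C : {set T}) x : (#|C| <= n.+1)%N -> phi_stable C ->
  x \in C -> x \notin P -> left_move black adj C x = left_move black adj (C :\: P) x.
Proof.
move=> leCn Cs xC xP; have xCP : x \in C :\: P by rewrite in_setD xP.
rewrite /left_move; have -> : nbhd C x = nbhd (C :\: P) x.
  apply/setP => v; rewrite !in_nbhd in_setD; case: (v == x) => //=.
  by case xv: (adj x v); rewrite ?andbF ?andbT // -(P_closed xv) xP.
set N := nbhd (C :\: P) x; have NCP : N \subset C :\: P := nbhd_sub adj xCP.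
have -> : C :\: P :\: N = C :\: N :\: P by rewrite !setDDl setUC.
congr (_ + _); apply: IH col _ _ _ _.
  by have := card_setD_nbhd adj (C :\: P) xC; rewrite -/N; lia.
move=> v /setDP[vC vN] vP; rewrite in_setD Cs // andbT.
by apply/negP => /(subsetP NCP) /setDP[_]; rewrite phiP.
Qed.

Lemma core_score_true_le_setD_P (C : {set T}) : (#|C| <= n.+1)%N ->
  isolated adj C = set0 -> phi_stable C ->
  core_score black adj true C <= core_score black adj true (C :\: P).
Proof.
move=> leCn C0 Cs.
have [/exists_inP[x0 x0C bx0] | /exists_inPn noblack] := boolP [exists x in C, black x];
  last by rewrite (@monochromatic_set0 _ _ _ bw_bip C false) ?set0D // => v /noblack/negbTE.
have CP0 : isolated adj (C :\: P) = set0 by rewrite isolated_setD_P C0 set0D.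
apply: (core_score_true_le x0C bx0) => x xC bx.
rewrite -(score_isolated0 black true CP0).
have [xP | xP] := boolP (x \in P); last first.
  rewrite left_move_outside_P // score_isolated0 //.
  by apply: left_move_le_core_score; rewrite // in_setD xP.
apply: le_trans (left_move_mirror C0 Cs xC xP bx) _; set N := nbhd C x.
have NP : N \subset P.
  by apply/subsetP => v; rewrite in_nbhd => /orP[/eqP-> // | /andP[_ xv]]; rewrite -(P_closed xv).
rewrite IH //.
- suff -> : C :\: N :\: phi @: N :\: P = C :\: P by [].
  apply/setP => v; rewrite !in_setD mem_imset_phi.
  have [vP | vP] //= := boolP (v \in P).
  by rewrite (contraNF (subsetP NP v) vP) (contraNF (subsetP NP _) (phi_notin_P vP)).
- have := card_setD_nbhd adj C xC; have := subset_leq_card (subsetDl (C :\: N) (phi @: N)).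
  by rewrite -/N; lia.
- move=> v /setDP[/setDP[vC vN] vM] vP.
  by rewrite !in_setD mem_imset_phi phi_inv Cs // vN andbT -mem_imset_phi.
Qed.

End RemovalStep.
End Colouring.

Lemma bw_colouring_negb black : bw_colouring black -> bw_colouring (negb \o black).
Proof.
case=> bip flip; split=> [u v /bip | v /flip /= ->] //.
by rewrite /=; case: (black u); case: (black v).
Qed.

Lemma score_true_setD_P n (IH : removal_bound n) black (col : bw_colouring black)
    (C : {set T}) : (#|C| <= n.+1)%N -> isolated adj C = set0 -> phi_stable C ->
  score black adj true C = score black adj true (C :\: P).
Proof.
move=> leCn C0 Cs; have CP0 : isolated adj (C :\: P) = set0 by rewrite isolated_setD_P C0 set0D.
rewrite !score_isolated0 //; apply/eqP; rewrite eq_le (core_score_true_le_setD_P col IH) // andTb.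
have [/exists_inP[x0 x0CP bx0] | /exists_inPn noblack] := boolP [exists x in C :\: P, black x].
  apply: (core_score_true_le x0CP bx0) => x /setDP[xC xP] bx.
  by rewrite -(left_move_outside_P col IH) // left_move_le_core_score.
(* Now [C] lies in [P]: with the colours reversed, the mirror bound gives
   [0 <= score false C]. *)
have CP_0 : C :\: P = set0.
  apply: (@monochromatic_set0 _ _ _ (bw_bip col) _ false CP0).
  by move=> v /noblack /negbTE.
have := core_score_true_le_setD_P (bw_colouring_negb col) IH leCn C0 Cs.
rewrite CP_0 !core_score_set0 -(score_isolated0 (negb \o black) true C0) score_negb.
rewrite oppr_le0 -(score_isolated0 black true C0); move/le_trans; apply.
exact: nonzugzwang adj_sym adj_irr (bw_bip col) C.
Qed.

Lemma removal_step n : removal_bound n -> removal_bound n.+1.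
Proof.
move=> IH black col b Q leQ Qs.
rewrite !score_unfold (credit_setD_P col Qs) core_setD_P; congr (_ + _).
have C0 := isolated_core adj_sym Q.
have CP0 : isolated adj (core adj Q :\: P) = set0 by rewrite isolated_setD_P C0 set0D.
have leCn : (#|core adj Q| <= n.+1)%N := leq_trans (subset_leq_card (core_sub adj Q)) leQ.
have Cs := phi_stable_core Qs.
rewrite -(score_isolated0 _ _ C0) -(score_isolated0 _ _ CP0).
case: b; first exact: (score_true_setD_P IH col).
have := score_true_setD_P IH (bw_colouring_negb col) leCn C0 Cs.
by rewrite !score_negb => /oppr_inj.
Qed.

Lemma score_setD_P black b (Q : {set T}) : bw_colouring black -> phi_stable Q ->
  score black adj b Q = score black adj b (Q :\: P).
Proof.
suff removal n : removal_bound n by move=> col; apply: removal col b Q (leqnn _).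
elim: n => [black' _ b' Q' | n IH]; last exact: removal_step.
by rewrite leqn0 cards_eq0 => /eqP-> _; rewrite set0D.
Qed.

End SymmetricRemoval.

Section Embedding.
Variables (T1 T2 : finType) (black1 : T1 -> bool) (adj1 : rel T1).
Variables (black2 : T2 -> bool) (adj2 : rel T2) (f : T1 -> T2).
Hypotheses (f_inj : injective f) (f_black : forall v, black2 (f v) = black1 v).
Hypothesis f_adj : forall u v, adj2 (f u) (f v) = adj1 u v.

Lemma imsetD_inj (A B : {set T1}) : f @: (A :\: B) = f @: A :\: f @: B.
Proof.
apply/setP => z; apply/imsetP/setDP => [[u /setDP[uA uB] ->] | [/imsetP[u uA ->]]].
  by rewrite !mem_imset.
by rewrite mem_imset // => uB; exists u; rewrite // inE uB.
Qed.

Lemma nbrs_imset (S : {set T1}) x : nbrs adj2 (f @: S) (f x) = f @: nbrs adj1 S x.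
Proof.
apply/setP => z; apply/setIdP/imsetP => [[/imsetP[u uS ->]] | [u /setIdP[uS xu] ->]].
  by rewrite f_adj => xu; exists u; rewrite // inE uS.
by rewrite mem_imset // f_adj.
Qed.

Lemma closed_nbhd_imset (S : {set T1}) x :
  closed_nbhd adj2 (f @: S) (f x) = f @: closed_nbhd adj1 S x.
Proof. by rewrite /closed_nbhd imsetU1 nbrs_imset. Qed.

Lemma isolated_imset (S : {set T1}) : isolated adj2 (f @: S) = f @: isolated adj1 S.
Proof.
apply/setP => z; apply/setIdP/imsetP => [[/imsetP[u uS ->]] | [u /setIdP[uS] nu ->]].
  by rewrite nbrs_imset imset_eq0 => nu; exists u; rewrite // inE uS.
by rewrite mem_imset // nbrs_imset imset_eq0.
Qed.

Lemma core_imset (S : {set T1}) : core adj2 (f @: S) = f @: core adj1 S.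
Proof. by rewrite /core isolated_imset imsetD_inj. Qed.

Lemma signed_card_imset (A : {set T1}) : signed_card black2 (f @: A) = signed_card black1 A.
Proof.
rewrite /signed_card big_imset /=; last by move=> u v _ _; apply: f_inj.
by apply: eq_bigr => v _; rewrite f_black.
Qed.

Lemma imset_setId (A : {set T1}) (p1 : pred T1) (p2 : pred T2) :
  (forall v, p2 (f v) = p1 v) -> [set y in f @: A | p2 y] = f @: [set x in A | p1 x].
Proof.
move=> p21; apply/setP => z; apply/setIdP/imsetP => [[/imsetP[u uA ->]] | [u /setIdP[uA pu] ->]].
  by rewrite p21 => pu; exists u; rewrite // inE uA.
by rewrite mem_imset // p21.
Qed.

Lemma map_enum_imset (A : {set T1}) (g2 : T2 -> int) (g1 : T1 -> int) :
  {in A, forall x, g2 (f x) = g1 x} ->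
  [seq g2 y | y <- enum (f @: A)] =i [seq g1 x | x <- enum A].
Proof.
move=> g21 z; apply/mapP/mapP => [[y] | [x]]; rewrite mem_enum.
  by move=> /imsetP[x xA ->] ->; exists x; rewrite ?mem_enum ?g21.
by move=> xA ->; exists (f x); rewrite ?mem_enum ?imset_f ?g21.
Qed.

Lemma score_imset b (S : {set T1}) : score black2 adj2 b (f @: S) = score black1 adj1 b S.
Proof.
have [k] := ubnP #|S|; elim: k b S => // k IH b S ltSk.
rewrite !score_unfold !credit_signed_card isolated_imset signed_card_imset core_imset.
congr (_ + _); set C := core adj1 S.
have scoreE b' x : x \in C -> score black2 adj2 b' (f @: C :\: closed_nbhd adj2 (f @: C) (f x))
    = score black1 adj1 b' (C :\: closed_nbhd adj1 C x).
  move=> xC; rewrite closed_nbhd_imset -imsetD_inj IH //.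
  by have := card_setD_nbhd adj1 C xC; have := subset_leq_card (core_sub adj1 S); rewrite -/C; lia.
have cardE x : #|closed_nbhd adj2 (f @: C) (f x)| = #|closed_nbhd adj1 C x|.
  by rewrite closed_nbhd_imset card_imset.
case: b; rewrite /core_score.
  rewrite (imset_setId _ f_black); apply: eq_seqmax; apply: map_enum_imset.
  by move=> x /setIdP[xC _]; rewrite /left_move cardE scoreE.
rewrite (@imset_setId _ (negb \o black1)) => [|v]; last by rewrite /= f_black.
apply: eq_seqmin; apply: map_enum_imset.
by move=> x /setIdP[xC _]; rewrite /right_move cardE scoreE.
Qed.

End Embedding.

Lemma score_BW_automorphism (V : finType) (black : V -> bool) (adj : rel V) (phi : V -> V) b :
  is_bigraph black adj -> BW_automorphism black adj phi -> score black adj b setT = 0.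
Proof.
move=> [adj_sym [adj_irr bip]] [phi_adj [phi_inv [phi_black phi_far]]].
rewrite (score_setD_P (P := setT) adj_sym adj_irr phi_inv phi_adj) ?setDv ?score_set0 //.
by move=> u v _; rewrite !inE.
Qed.

Section DisjointSum.
Variables (V V' : finType) (black : V -> bool) (adj : rel V) (phi : V -> V).
Variables (black' : V' -> bool) (adj' : rel V').
Hypotheses (G : is_bigraph black adj) (BW : BW_automorphism black adj phi).
Hypothesis G' : is_bigraph black' adj'.

Local Notation adjS := (sum_adj adj adj').
Local Notation blackS := (sum_black black black').

Definition lift_inl (z : V + V') : V + V' := if z is inl v then inl (phi v) else z.

Definition left_part : {set V + V'} := [set z | if z is inl _ then true else false].

Lemma score_sum_BW_automorphism b : score blackS adjS b setT = score black' adj' b setT.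
Proof.
have [adj_sym [adj_irr bip]] := G; have [adj_sym' [adj_irr' bip']] := G'.
have [phi_adj [phi_inv [phi_black phi_far]]] := BW.
have right_part : [set: V + V'] :\: left_part = inr @: [set: V'].
  by apply/setP => -[v | v]; rewrite !inE ?imset_f //; apply/esym/imsetP => -[].
rewrite (@score_setD_P _ adjS left_part lift_inl) ?right_part.
- by apply: score_imset => // u v [].
- by case=> [u|u] [v|v] //=; rewrite adj_sym.
- by case=> [u|u] //=.
- by case=> [u|u] //=; rewrite phi_inv.
- by case=> [u|u] [v|v] //=.
- by case=> [u|u]; rewrite !inE.
- by case=> [u|u] [v|v]; rewrite !inE.
- case=> [u|u]; rewrite inE // => _; have [upu [nupu /existsPn no2]] := phi_far u.
  split; first by apply/eqP => -[e]; move: upu; rewrite -e eqxx.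
  by split=> //; apply/existsPn => -[w|w] //=; exact: no2.
- split; first by case=> [u|u] [v|v] //=; [exact: bip | exact: bip'].
  by case=> [u|u]; rewrite inE //= => _; exact: phi_black.
- by move=> v _ _; rewrite inE.
Qed.

End DisjointSum.

Theorem mainTheorem10 (V : finType) (black : V -> bool) (adj : rel V)
    (phi : V -> V) :
  is_bigraph black adj -> BW_automorphism black adj phi ->
  is_zero black adj /\ Ls black adj = 0%R /\ Rs black adj = 0%R.
Proof.
move=> G BW; split; last by split; exact: score_BW_automorphism G BW.
by move=> V' black' adj' G'; split; apply: (score_sum_BW_automorphism G BW G').
Qed.
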